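(* Let $a_1,a_2,a_3\in\mathbb C$ be distinct and non-collinear, $\{i,j,k\}=\{1,2,3\}$, let $b$ be a point in the interior of the triangle $\Delta_Q$, and let $l_b$ be the straight line through $b$ parallel to the side $\overline{a_ja_k}$. Then there exists a unique point $b'\in l_b$ such that $\int_{a_j}^{a_k}\sqrt{\frac{b'-t}{(t-a_1)(t-a_2)(t-a_3)}}\,dt\in\mathbb R$, and moreover $b'\in\Delta_Q\cap l_b$.
   Context: $\Delta_Q$ is the convex hull of $a_1,a_2,a_3$. The integral is along the straight segment from $a_j$ to $a_k$ with a continuous branch of the square root (the reality condition does not depend on the branch). *)

From Stdlib Require Import Reals Lra.
Open Scope R_scope.

Definition Cpx : Type := (R * R)%type.
Definition Re (z : Cpx) : R := fst z.
Definition Im (z : Cpx) : R := snd z.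
Definition Cadd (z w : Cpx) : Cpx := (fst z + fst w, snd z + snd w).
Definition Csub (z w : Cpx) : Cpx := (fst z - fst w, snd z - snd w).
Definition Cmul (z w : Cpx) : Cpx :=
  (fst z * fst w - snd z * snd w, fst z * snd w + snd z * fst w).
Definition Cinv (z : Cpx) : Cpx :=
  (fst z / (fst z ^ 2 + snd z ^ 2), - snd z / (fst z ^ 2 + snd z ^ 2)).
Definition Cdiv (z w : Cpx) : Cpx := Cmul z (Cinv w).
Definition Cscale (r : R) (z : Cpx) : Cpx := (r * fst z, r * snd z).

Definition noncollinear (a1 a2 a3 : Cpx) : Prop :=
  (fst a2 - fst a1) * (snd a3 - snd a1) - (snd a2 - snd a1) * (fst a3 - fst a1) <> 0.

Definition in_triangle (a1 a2 a3 z : Cpx) : Prop :=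
  exists l1 l2 l3 : R, 0 <= l1 /\ 0 <= l2 /\ 0 <= l3 /\ l1 + l2 + l3 = 1 /\
    z = Cadd (Cadd (Cscale l1 a1) (Cscale l2 a2)) (Cscale l3 a3).

Definition in_triangle_interior (a1 a2 a3 z : Cpx) : Prop :=
  exists l1 l2 l3 : R, 0 < l1 /\ 0 < l2 /\ 0 < l3 /\ l1 + l2 + l3 = 1 /\
    z = Cadd (Cadd (Cscale l1 a1) (Cscale l2 a2)) (Cscale l3 a3).

Definition sel (a1 a2 a3 : Cpx) (n : nat) : Cpx :=
  match n with 1%nat => a1 | 2%nat => a2 | _ => a3 end.

Definition on_parallel_line (b p q z : Cpx) : Prop :=
  exists r : R, z = Cadd b (Cscale r (Csub q p)).

Definition improper_int (f : R -> R) (a b l : R) : Prop :=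
  (forall c d, a < c -> c <= d -> d < b -> exists _ : Riemann_integrable f c d, True) /\
  (forall eps, 0 < eps -> exists delta, 0 < delta /\
     forall c d (pr : Riemann_integrable f c d),
       a < c -> c < a + delta -> b - delta < d -> d < b -> c <= d ->
       Rabs (RiemannInt pr - l) < eps).

Definition integrand (a1 a2 a3 b' t : Cpx) : Cpx :=
  Cdiv (Csub b' t) (Cmul (Cmul (Csub t a1) (Csub t a2)) (Csub t a3)).

(* The integral  int_{p}^{q} sqrt((b'-t)/((t-a1)(t-a2)(t-a3))) dt  along the straight
   segment t = p + s (q - p), s in (0,1), with a continuous branch h of the square root
   on the open segment, exists (as an improper integral) and is a real number.
   With dt = (q - p) ds, the integral is  int_0^1 h(s) (q - p) ds. *)
Definition segment_integral_real (a1 a2 a3 b' p q : Cpx) : Prop :=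
  exists h : R -> Cpx,
    (forall s, 0 < s < 1 ->
        continuity_pt (fun u => fst (h u)) s /\ continuity_pt (fun u => snd (h u)) s) /\
    (forall s, 0 < s < 1 ->
        Cmul (h s) (h s) = integrand a1 a2 a3 b' (Cadd p (Cscale s (Csub q p)))) /\
    (exists L : R, improper_int (fun s => fst (Cmul (h s) (Csub q p))) 0 1 L) /\
    improper_int (fun s => snd (Cmul (h s) (Csub q p))) 0 1 0.

From Stdlib Require Import Reals Ranalysis5 Lra Lia Psatz Field.
From Stdlib Require Import Classical ClassicalEpsilon FunctionalExtensionality.
From Coquelicot Require Import Hierarchy RInt RInt_analysis Derive AutoDerive Continuity.
Open Scope R_scope.

(* Being real is invariant under complex affine maps and under conjugation, and depends only on
   the set of vertices; so we normalize the side to [0,1] and the apex to a + i e with e > 0,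
   the parallel becoming Im w = y0 with 0 < y0 < e.  For s in (0,1) the integrand is
   weight(s)^2 (s - w)/(s - alpha) with weight(s) = 1/sqrt(s(1-s)); since (s - w)/(s - alpha)
   avoids the negative real axis, weight(s) times its principal square root is a branch with
   positive real part, and every continuous branch is plus or minus this one.  Thus the integral
   is real iff J(x) = 0, J(x) being the improper integral of the imaginary part of this branch
   at w = x + i y0.  A study of square roots of the points of a line shows that J is continuous
   and strictly decreasing, positive on the side [0, alpha] and negative on the side [1, alpha];
   the intermediate value theorem yields the unique zero, between the two sides. *)

Definition cont01 (f : R -> R) : Prop := forall s, 0 < s < 1 -> continuity_pt f s.

Lemma ex_RInt_cont01 f c d : cont01 f -> 0 < c -> c <= d -> d < 1 -> ex_RInt f c d.
Proof.
  intros Hf Hc Hcd Hd. apply (@ex_RInt_continuous R_CompleteNormedModule). intros z Hz.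
  rewrite Rmin_left, Rmax_right in Hz by lra.
  apply continuity_pt_filterlim, Hf; lra.
Qed.

Lemma cont01_plus_scal f g l : cont01 f -> cont01 g -> cont01 (fun s => f s + l * g s).
Proof.
  intros Hf Hg s Hs. apply continuity_pt_plus; [apply Hf; auto|].
  apply continuity_pt_mult; [apply continuity_pt_const; intros ? ?; reflexivity | apply Hg; auto].
Qed.

(* The weight 1/sqrt(s(1-s)) of the endpoint singularities of the integrand; the majorant
   1/sqrt s + 1/sqrt(1-s) has the explicit primitive 2 sqrt s - 2 sqrt(1-s). *)
Definition weight (s : R) : R := / (sqrt s * sqrt (1 - s)).
Definition weight_majorant (s : R) : R := / sqrt s + / sqrt (1 - s).
Definition majorant_primitive (s : R) : R := 2 * sqrt s - 2 * sqrt (1 - s).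

Lemma weight_pos s : 0 < s < 1 -> 0 < weight s.
Proof. intros; unfold weight; apply Rinv_0_lt_compat, Rmult_lt_0_compat; apply sqrt_lt_R0; lra. Qed.

Lemma weight_cont01 : cont01 weight.
Proof.
  intros s Hs. unfold weight. reg; try lra.
  apply Rmult_integral_contrapositive; split; apply Rgt_not_eq, sqrt_lt_R0; lra.
Qed.

Lemma weight_sq s : 0 < s < 1 -> weight s * weight s = / (s * (1 - s)).
Proof.
  intros Hs. unfold weight.
  assert (0 < sqrt s) by (apply sqrt_lt_R0; lra). assert (0 < sqrt (1 - s)) by (apply sqrt_lt_R0; lra).
  replace (s * (1 - s)) with ((sqrt s * sqrt s) * (sqrt (1 - s) * sqrt (1 - s)))
    by (rewrite !sqrt_sqrt by lra; ring).
  field. lra.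
Qed.

(* Since sqrt s + sqrt(1-s) >= 1, the weight is below its majorant. *)
Lemma weight_le_majorant s : 0 < s < 1 -> weight s <= weight_majorant s.
Proof.
  intros Hs. unfold weight, weight_majorant.
  assert (Hu : 0 < sqrt s) by (apply sqrt_lt_R0; lra).
  assert (Hv : 0 < sqrt (1 - s)) by (apply sqrt_lt_R0; lra).
  assert (Hsum : 1 <= sqrt s + sqrt (1 - s)).
  { assert (sqrt s * sqrt s = s) by (apply sqrt_sqrt; lra).
    assert (sqrt (1 - s) * sqrt (1 - s) = 1 - s) by (apply sqrt_sqrt; lra). nra. }
  replace (/ sqrt s + / sqrt (1 - s)) with ((sqrt s + sqrt (1 - s)) * / (sqrt s * sqrt (1 - s)))
    by (field; lra).
  assert (0 < / (sqrt s * sqrt (1 - s))) by (apply Rinv_0_lt_compat; nra). nra.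
Qed.

Lemma RInt_weight_le c d : 0 < c -> c <= d -> d < 1 -> RInt weight c d <= 4.
Proof.
  intros Hc Hcd Hd. set (P := majorant_primitive).
  assert (HE : is_RInt weight_majorant c d (P d - P c)).
  { apply (is_RInt_derive P weight_majorant); intros x Hx;
      rewrite Rmin_left, Rmax_right in Hx by lra.
    - unfold P, majorant_primitive, weight_majorant. auto_derive; [lra|].
      assert (0 < sqrt x) by (apply sqrt_lt_R0; lra).
      assert (0 < sqrt (1 - x)) by (apply sqrt_lt_R0; lra).
      replace (1 + - x) with (1 - x) by ring. field; lra.
    - apply continuity_pt_filterlim. unfold weight_majorant.
      reg; try lra; apply Rgt_not_eq, sqrt_lt_R0; lra. }
  assert (Hle : RInt weight c d <= RInt weight_majorant c d).
  { apply RInt_le; auto.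
    - apply ex_RInt_cont01; auto; apply weight_cont01.
    - exists (P d - P c); auto.
    - intros; apply weight_le_majorant; lra. }
  rewrite (is_RInt_unique _ _ _ _ HE) in Hle. unfold P, majorant_primitive in Hle.
  assert (sqrt d <= sqrt 1) by (apply sqrt_le_1_alt; lra).
  assert (sqrt (1 - c) <= sqrt 1) by (apply sqrt_le_1_alt; lra).
  rewrite sqrt_1 in *. pose proof (sqrt_pos c). pose proof (sqrt_pos (1 - d)). lra.
Qed.

(* The improper integral over (0,1) of the statement, restated with Coquelicot's total
   Riemann integral RInt, which comes with the usual algebra of integrals. *)
Definition improper01 (f : R -> R) (L : R) : Prop :=
  (forall c d, 0 < c -> c <= d -> d < 1 -> ex_RInt f c d) /\
  (forall eps, 0 < eps -> exists delta, 0 < delta /\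
     forall c d, 0 < c -> c < delta -> 1 - delta < d -> d < 1 -> c <= d ->
       Rabs (RInt f c d - L) < eps).

Lemma improper_int_iff f L : improper_int f 0 1 L <-> improper01 f L.
Proof.
  split; intros [Hint Hlim].
  - split.
    + intros c d Hc Hcd Hd. destruct (Hint c d Hc Hcd Hd) as [pr _]. exact (ex_RInt_Reals_1 _ _ _ pr).
    + intros eps Heps. destruct (Hlim eps Heps) as [delta [Hdelta Hclose]].
      exists delta; split; [exact Hdelta|]. intros c d Hc Hcd1 Hd1 Hd Hcd.
      destruct (Hint c d Hc Hcd Hd) as [pr _]. rewrite (RInt_Reals _ _ _ pr).
      apply Hclose; lra.
  - split.
    + intros c d Hc Hcd Hd. exists (ex_RInt_Reals_0 _ _ _ (Hint c d Hc Hcd Hd)). exact I.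
    + intros eps Heps. destruct (Hlim eps Heps) as [delta [Hdelta Hclose]].
      exists delta; split; [exact Hdelta|]. intros c d pr Hc Hcd1 Hd1 Hd Hcd.
      rewrite <- (RInt_Reals _ _ _ pr). apply Hclose; lra.
Qed.

Lemma improper01_eventually f L eps : improper01 f L -> 0 < eps ->
  exists delta, 0 < delta < 1/4 /\
    forall c, 0 < c < delta -> Rabs (RInt f c (1 - c) - L) < eps.
Proof.
  intros [_ Hlim] Heps. destruct (Hlim eps Heps) as [delta [Hdelta Hclose]].
  exists (Rmin delta (1/8)).
  assert (Hm1 := Rmin_l delta (1/8)). assert (Hm2 := Rmin_r delta (1/8)).
  split; [split; [apply Rmin_pos|]; lra|]. intros c Hc. apply Hclose; lra.
Qed.

Lemma improper01_unique f L1 L2 : improper01 f L1 -> improper01 f L2 -> L1 = L2.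
Proof.
  intros H1 H2. apply NNPP; intro Hne.
  set (eps := Rabs (L1 - L2) / 2).
  assert (Heps : 0 < eps) by (unfold eps; pose proof (Rabs_pos_lt (L1 - L2)); lra).
  destruct (improper01_eventually f L1 eps H1 Heps) as [d1 [Hd1 P1]].
  destruct (improper01_eventually f L2 eps H2 Heps) as [d2 [Hd2 P2]].
  set (c := Rmin d1 d2 / 2).
  assert (Hm1 := Rmin_l d1 d2). assert (Hm2 := Rmin_r d1 d2).
  assert (0 < Rmin d1 d2) by (apply Rmin_pos; lra).
  specialize (P1 c ltac:(unfold c; lra)). specialize (P2 c ltac:(unfold c; lra)).
  unfold eps in *. split_Rabs; lra.
Qed.

Lemma RInt_plus_scal f g l c d : ex_RInt f c d -> ex_RInt g c d ->
  RInt (fun x => f x + l * g x) c d = RInt f c d + l * RInt g c d.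
Proof.
  intros Hf Hg.
  change (RInt (fun x => plus (f x) (scal l (g x))) c d = plus (RInt f c d) (scal l (RInt g c d))).
  rewrite (@RInt_plus R_CompleteNormedModule), (@RInt_scal R_CompleteNormedModule); auto.
  now apply ex_RInt_scal.
Qed.

Lemma ex_RInt_plus_scal f g l c d : ex_RInt f c d -> ex_RInt g c d ->
  ex_RInt (fun x => f x + l * g x) c d.
Proof. intros Hf Hg. apply (ex_RInt_plus f (fun x => scal l (g x))); auto. now apply ex_RInt_scal. Qed.

Lemma improper01_lin f g l L1 L2 : improper01 f L1 -> improper01 g L2 ->
  improper01 (fun x => f x + l * g x) (L1 + l * L2).
Proof.
  intros [I1 H1] [I2 H2]. split.
  - intros c d Hc Hcd Hd. apply ex_RInt_plus_scal; auto.
  - intros eps Heps.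
    set (e := eps / (1 + Rabs l)).
    assert (Hl : 0 <= Rabs l) by apply Rabs_pos.
    assert (He : 0 < e) by (unfold e; apply Rdiv_lt_0_compat; lra).
    destruct (H1 e He) as [d1 [Hd1 P1]]. destruct (H2 e He) as [d2 [Hd2 P2]].
    exists (Rmin d1 d2). split; [apply Rmin_pos; lra|].
    assert (Hm1 := Rmin_l d1 d2). assert (Hm2 := Rmin_r d1 d2).
    intros c d Hc Hcd1 Hd1' Hd Hcd.
    rewrite RInt_plus_scal by auto.
    specialize (P1 c d Hc ltac:(lra) ltac:(lra) Hd Hcd).
    specialize (P2 c d Hc ltac:(lra) ltac:(lra) Hd Hcd).
    replace (RInt f c d + l * RInt g c d - (L1 + l * L2)) with
      ((RInt f c d - L1) + l * (RInt g c d - L2)) by ring.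
    eapply Rle_lt_trans; [apply Rabs_triang|]. rewrite Rabs_mult.
    assert (Rabs l * Rabs (RInt g c d - L2) <= Rabs l * e) by (apply Rmult_le_compat_l; lra).
    assert (e * (1 + Rabs l) = eps) by (unfold e; field; lra).
    nra.
Qed.

Lemma improper01_ext f g L : (forall s, 0 < s < 1 -> f s = g s) ->
  improper01 f L -> improper01 g L.
Proof.
  intros E [I1 H1].
  assert (Eint : forall c d, 0 < c -> c <= d -> d < 1 -> RInt f c d = RInt g c d).
  { intros c d ? ? ?. apply RInt_ext. intros x Hx.
    rewrite Rmin_left, Rmax_right in Hx by lra. apply E; lra. }
  split.
  - intros c d Hc Hcd Hd. apply (ex_RInt_ext f); auto.
    intros x Hx. rewrite Rmin_left, Rmax_right in Hx by lra. apply E; lra.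
  - intros eps Heps. destruct (H1 eps Heps) as [delta [Hdelta P]].
    exists delta; split; auto. intros c d Hc ? ? Hd Hcd. rewrite <- Eint by lra. auto.
Qed.

Lemma improper01_scal f k L : improper01 f L -> improper01 (fun s => k * f s) (k * L).
Proof.
  intros H. replace (k * L) with (L + (k - 1) * L) by ring.
  apply (improper01_ext (fun x => f x + (k - 1) * f x)); [intros; ring|].
  now apply improper01_lin.
Qed.

Lemma RInt_chasles01 f a b c : cont01 f -> 0 < a -> a <= b -> b <= c -> c < 1 ->
  RInt f a b + RInt f b c = RInt f a c.
Proof.
  intros Hf ? ? ? ?. apply (@RInt_Chasles R_CompleteNormedModule); apply ex_RInt_cont01; auto; lra.
Qed.

Lemma antitone_right_limit (g : R -> R) h K : 0 < h ->
  (forall c1 c2, 0 < c1 -> c1 <= c2 -> c2 <= h -> g c2 <= g c1) ->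
  (forall c, 0 < c <= h -> g c <= K) ->
  exists l, forall eps, 0 < eps -> exists delta, 0 < delta <= h /\
    forall c, 0 < c < delta -> Rabs (g c - l) < eps.
Proof.
  intros Hh Hmono Hb.
  set (E := fun y => exists c, 0 < c <= h /\ y = g c).
  assert (bE : bound E) by (exists K; intros y [c [Hc ->]]; auto).
  assert (nE : exists y, E y) by (exists (g h); exists h; split; [lra|auto]).
  destruct (completeness E bE nE) as [l [Hub Hlub]].
  exists l. intros eps Heps.
  destruct (classic (exists c0, 0 < c0 <= h /\ l - eps < g c0)) as [[c0 [Hc0 Hg0]]|Hn].
  - exists c0. split; auto. intros c Hc.
    assert (g c0 <= g c) by (apply Hmono; lra).
    assert (g c <= l) by (apply Hub; exists c; split; [lra|auto]).
    apply Rabs_def1; lra.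
  - exfalso. assert (l <= l - eps); [|lra].
    apply Hlub. intros y [c [Hc ->]].
    apply Rnot_lt_le. intro Hlt. apply Hn. exists c; split; auto.
Qed.

(* A nonnegative continuous function on (0,1) with uniformly bounded partial integrals has an
   improper integral: the partial integrals from c to 1/2 and from 1/2 to 1-c are monotone. *)
Lemma improper01_nonneg_exists f K : cont01 f -> (forall s, 0 < s < 1 -> 0 <= f s) ->
  (forall c d, 0 < c -> c <= d -> d < 1 -> RInt f c d <= K) ->
  exists L, improper01 f L.
Proof.
  intros Hf Hpos Hbnd.
  assert (Hnn : forall c d, 0 < c -> c <= d -> d < 1 -> 0 <= RInt f c d).
  { intros c d ? ? ?. apply RInt_ge_0; auto. apply ex_RInt_cont01; auto.
    intros; apply Hpos; lra. }
  destruct (antitone_right_limit (fun c => RInt f c (1/2)) (1/2) K ltac:(lra)) as [lL HL].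
  { intros c1 c2 ? ? ?. rewrite <- (RInt_chasles01 f c1 c2 (1/2)) by (auto; lra).
    pose proof (Hnn c1 c2 ltac:(lra) ltac:(lra) ltac:(lra)). lra. }
  { intros c Hc. apply Hbnd; lra. }
  destruct (antitone_right_limit (fun c => RInt f (1/2) (1 - c)) (1/2) K ltac:(lra)) as [lR HR].
  { intros c1 c2 ? ? ?. rewrite <- (RInt_chasles01 f (1/2) (1 - c2) (1 - c1)) by (auto; lra).
    pose proof (Hnn (1 - c2) (1 - c1) ltac:(lra) ltac:(lra) ltac:(lra)). lra. }
  { intros c Hc. apply Hbnd; lra. }
  exists (lL + lR). split.
  - intros c d ? ? ?. apply ex_RInt_cont01; auto.
  - intros eps Heps.
    destruct (HL (eps/2) ltac:(lra)) as [d1 [Hd1 P1]].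
    destruct (HR (eps/2) ltac:(lra)) as [d2 [Hd2 P2]].
    exists (Rmin d1 d2). split; [apply Rmin_pos; lra|].
    assert (Hm1 := Rmin_l d1 d2). assert (Hm2 := Rmin_r d1 d2).
    intros c d Hc ? ? Hd Hcd.
    rewrite <- (RInt_chasles01 f c (1/2) d) by (auto; lra).
    specialize (P1 c ltac:(lra)). specialize (P2 (1 - d) ltac:(lra)).
    replace (1 - (1 - d)) with d in P2 by ring. cbv beta in P1, P2.
    apply Rabs_def2 in P1. apply Rabs_def2 in P2. apply Rabs_def1; lra.
Qed.

Lemma dominated_const_nonneg f M : (forall s, 0 < s < 1 -> Rabs (f s) <= M * weight s) -> 0 <= M.
Proof.
  intros H. specialize (H (1/2) ltac:(lra)).
  pose proof (weight_pos (1/2) ltac:(lra)). pose proof (Rabs_pos (f (1/2))). nra.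
Qed.

Lemma RInt_scal_R g k c d : ex_RInt g c d -> RInt (fun x => k * g x) c d = k * RInt g c d.
Proof. intros Hg. exact (@RInt_scal R_CompleteNormedModule g c d k Hg). Qed.

Lemma RInt_dominated f M c d : 0 < c -> c <= d -> d < 1 -> ex_RInt f c d ->
  (forall s, 0 < s < 1 -> Rabs (f s) <= M * weight s) -> Rabs (RInt f c d) <= 4 * M.
Proof.
  intros Hc Hcd Hd Hf HM. pose proof (dominated_const_nonneg f M HM) as HM0.
  assert (HD : ex_RInt weight c d) by (apply ex_RInt_cont01; auto; apply weight_cont01).
  assert (HD0 : 0 <= RInt weight c d).
  { apply RInt_ge_0; auto. intros; apply Rlt_le, weight_pos; lra. }
  pose proof (RInt_weight_le c d Hc Hcd Hd) as HD4.
  assert (Hup : RInt f c d <= M * RInt weight c d).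
  { rewrite <- RInt_scal_R by auto. apply RInt_le; auto.
    - apply (@ex_RInt_scal R_NormedModule); auto.
    - intros x Hx. specialize (HM x ltac:(lra)). split_Rabs; lra. }
  assert (Hlo : - M * RInt weight c d <= RInt f c d).
  { rewrite <- RInt_scal_R by auto. apply RInt_le; auto.
    - apply (@ex_RInt_scal R_NormedModule); auto.
    - intros x Hx. specialize (HM x ltac:(lra)). split_Rabs; lra. }
  split_Rabs; nra.
Qed.

(* Domination by a multiple of the weight gives an improper integral: write f as the
   nonnegative function f + M weight minus M weight. *)
Lemma improper01_dominated_exists f M : cont01 f ->
  (forall s, 0 < s < 1 -> Rabs (f s) <= M * weight s) -> exists L, improper01 f L.
Proof.
  intros Hf HM.
  set (fp := fun x => f x + M * weight x).
  assert (Hfp : cont01 fp) by (apply cont01_plus_scal; auto; apply weight_cont01).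
  assert (Hfp_bounds : forall s, 0 < s < 1 -> 0 <= fp s /\ Rabs (fp s) <= (2 * M) * weight s).
  { intros s Hs. specialize (HM s Hs). unfold fp. split_Rabs; lra. }
  destruct (improper01_nonneg_exists fp (4 * (2 * M))) as [Lp HLp]; auto.
  { intros; apply Hfp_bounds; auto. }
  { intros c d ? ? ?. eapply Rle_trans; [apply Rle_abs|].
    apply RInt_dominated; auto. apply ex_RInt_cont01; auto. intros; apply Hfp_bounds; auto. }
  destruct (improper01_nonneg_exists weight 4) as [LD HLD]; auto using weight_cont01.
  { intros; apply Rlt_le, weight_pos; auto. }
  { intros; apply RInt_weight_le; auto. }
  exists (Lp + (- M) * LD). apply (improper01_ext (fun x => fp x + (- M) * weight x)).
  - intros; unfold fp; ring.
  - now apply improper01_lin.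
Qed.

Lemma improper01_dominated_bound f M L : improper01 f L ->
  (forall s, 0 < s < 1 -> Rabs (f s) <= M * weight s) -> Rabs L <= 4 * M.
Proof.
  intros HL HM. apply Rnot_lt_le. intro Hlt.
  destruct (improper01_eventually f L (Rabs L - 4 * M) HL ltac:(lra)) as [delta [Hdelta P]].
  specialize (P (delta / 2) ltac:(lra)).
  pose proof (RInt_dominated f M (delta / 2) (1 - delta / 2) ltac:(lra) ltac:(lra) ltac:(lra)
    (proj1 HL (delta / 2) (1 - delta / 2) ltac:(lra) ltac:(lra) ltac:(lra)) HM).
  split_Rabs; lra.
Qed.

Lemma improper01_pos f L : cont01 f -> (forall s, 0 < s < 1 -> 0 < f s) ->
  improper01 f L -> 0 < L.
Proof.
  intros Hf Hpos HL.
  assert (Hmid : 0 < RInt f (1/4) (3/4)).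
  { apply RInt_gt_0; [lra| intros; apply Hpos; lra|].
    intros x Hx. apply continuity_pt_filterlim, Hf; lra. }
  destruct (improper01_eventually f L _ HL Hmid) as [delta [Hdelta P]].
  specialize (P (delta / 2) ltac:(lra)).
  rewrite <- (RInt_chasles01 f (delta / 2) (1/4) (1 - delta / 2)) in P by (auto; lra).
  rewrite <- (RInt_chasles01 f (1/4) (3/4) (1 - delta / 2)) in P by (auto; lra).
  assert (0 <= RInt f (delta / 2) (1/4)).
  { apply RInt_ge_0; [lra| apply ex_RInt_cont01; auto; lra| intros; apply Rlt_le, Hpos; lra]. }
  assert (0 <= RInt f (3/4) (1 - delta / 2)).
  { apply RInt_ge_0; [lra| apply ex_RInt_cont01; auto; lra| intros; apply Rlt_le, Hpos; lra]. }
  split_Rabs; lra.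
Qed.

Definition C0 : Cpx := (0, 0).
Definition C1 : Cpx := (1, 0).
Definition Copp (z : Cpx) : Cpx := (- fst z, - snd z).
Definition RC (r : R) : Cpx := (r, 0).
Definition Cconj (z : Cpx) : Cpx := (fst z, - snd z).

Lemma Cpx_eq (z w : Cpx) : fst z = fst w -> snd z = snd w -> z = w.
Proof. destruct z, w; simpl; intros; subst; reflexivity. Qed.

Lemma Cnorm2_neq0 (z : Cpx) : z <> C0 -> fst z ^ 2 + snd z ^ 2 <> 0.
Proof.
  destruct z as [x y]; simpl; intros H E. apply H. unfold C0.
  assert (x = 0) by nra. assert (y = 0) by nra. subst; reflexivity.
Qed.

Lemma Cring : ring_theory C0 C1 Cadd Cmul Csub Copp (@eq Cpx).
Proof.
  constructor; intros; repeat match goal with z : Cpx |- _ => destruct z end;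
  apply Cpx_eq; simpl; ring.
Qed.

Lemma Cfield : field_theory C0 C1 Cadd Cmul Csub Copp Cdiv Cinv (@eq Cpx).
Proof.
  constructor.
  - exact Cring.
  - unfold C0, C1; intro H; injection H; lra.
  - reflexivity.
  - intros p Hp. pose proof (Cnorm2_neq0 p Hp) as Hn. destruct p as [x y]; cbn [fst snd] in *.
    unfold Cmul, Cinv, C1; apply Cpx_eq; cbn [fst snd]; field; auto.
Qed.

Add Field Cfield_inst : Cfield.

(* With the convention 1/0 = 0 of the reals, Cinv 0 = 0. *)
Lemma Cinv_C0 : Cinv C0 = C0.
Proof. unfold Cinv, C0; apply Cpx_eq; simpl; unfold Rdiv; rewrite Rmult_0_l; ring. Qed.

(* Since Cinv 0 = 0, inversion is multiplicative without any side condition. *)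
Lemma Cinv_mul z w : Cinv (Cmul z w) = Cmul (Cinv z) (Cinv w).
Proof.
  destruct (classic (z = C0)) as [->|Hz].
  { replace (Cmul C0 w) with C0 by ring. rewrite Cinv_C0. ring. }
  destruct (classic (w = C0)) as [->|Hw].
  { replace (Cmul z C0) with C0 by ring. rewrite Cinv_C0. ring. }
  field; auto.
Qed.

Lemma Cscale_RC r z : Cscale r z = Cmul (RC r) z.
Proof. apply Cpx_eq; simpl; ring. Qed.

Lemma Cconj_add z w : Cconj (Cadd z w) = Cadd (Cconj z) (Cconj w).
Proof. apply Cpx_eq; simpl; ring. Qed.
Lemma Cconj_sub z w : Cconj (Csub z w) = Csub (Cconj z) (Cconj w).
Proof. apply Cpx_eq; simpl; ring. Qed.
Lemma Cconj_mul z w : Cconj (Cmul z w) = Cmul (Cconj z) (Cconj w).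
Proof. apply Cpx_eq; simpl; ring. Qed.
Lemma Cconj_inv z : Cconj (Cinv z) = Cinv (Cconj z).
Proof.
  destruct z as [x y]. apply Cpx_eq; cbn [Cconj Cinv fst snd];
    replace ((- y) ^ 2) with (y ^ 2) by ring; unfold Rdiv; ring.
Qed.
Lemma Cconj_div z w : Cconj (Cdiv z w) = Cdiv (Cconj z) (Cconj w).
Proof. unfold Cdiv. rewrite Cconj_mul, Cconj_inv. reflexivity. Qed.
Lemma Cconj_RC r : Cconj (RC r) = RC r.
Proof. apply Cpx_eq; simpl; ring. Qed.
Lemma Cconj_involutive z : Cconj (Cconj z) = z.
Proof. apply Cpx_eq; simpl; ring. Qed.

Lemma Cmul_integral z w : Cmul z w = C0 -> z = C0 \/ w = C0.
Proof.
  intros H. destruct (classic (z = C0)) as [|Hz]; [left; auto|right].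
  replace w with (Cdiv (Cmul z w) z) by (field; auto). rewrite H. field. auto.
Qed.

Lemma Csq_eq_cases z w : Cmul z z = Cmul w w -> z = w \/ z = Copp w.
Proof.
  intros H.
  assert (Hf : Cmul (Csub z w) (Cadd z w) = C0).
  { replace (Cmul (Csub z w) (Cadd z w)) with (Csub (Cmul z z) (Cmul w w)) by ring.
    rewrite H. ring. }
  destruct (Cmul_integral _ _ Hf) as [H1|H1]; [left|right].
  - replace z with (Cadd (Csub z w) w) by ring. rewrite H1. ring.
  - replace z with (Csub (Cadd z w) w) by ring. rewrite H1. ring.
Qed.

(* The principal square root: the root with positive real part, off the negative real axis. *)
Definition Cnorm (z : Cpx) : R := sqrt (fst z ^ 2 + snd z ^ 2).
Definition Csqrt (z : Cpx) : Cpx :=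
  let r := sqrt ((Cnorm z + fst z) / 2) in (r, snd z / (2 * r)).

Lemma Csqrt_domain z : snd z <> 0 \/ 0 < fst z -> 0 < Cnorm z + fst z.
Proof.
  unfold Cnorm. intros H.
  assert (Hs := sqrt_pos (fst z ^ 2 + snd z ^ 2)).
  assert (Hsq : sqrt (fst z ^ 2 + snd z ^ 2) * sqrt (fst z ^ 2 + snd z ^ 2) = fst z ^ 2 + snd z ^ 2)
    by (apply sqrt_sqrt; nra).
  destruct H as [H|H]; [|nra].
  assert (0 < snd z * snd z) by (apply Rsqr_pos_lt; auto). nra.
Qed.

Lemma Csqrt_spec z : 0 < Cnorm z + fst z ->
  0 < fst (Csqrt z) /\ Cmul (Csqrt z) (Csqrt z) = z.
Proof.
  unfold Csqrt, Cnorm. destruct z as [X Y]; cbn [fst snd]. intros H.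
  set (m := sqrt (X ^ 2 + Y ^ 2)) in *.
  assert (Hm := sqrt_pos (X ^ 2 + Y ^ 2)). fold m in Hm.
  assert (Hmm : m * m = X ^ 2 + Y ^ 2) by (apply sqrt_sqrt; nra).
  assert (Hr : 0 < sqrt ((m + X) / 2)) by (apply sqrt_lt_R0; lra).
  assert (Hrr : sqrt ((m + X) / 2) * sqrt ((m + X) / 2) = (m + X) / 2) by (apply sqrt_sqrt; lra).
  set (r := sqrt ((m + X) / 2)) in *.
  split; [exact Hr|]. apply Cpx_eq; unfold Cmul; cbn [fst snd].
  - replace (r * r - Y / (2 * r) * (Y / (2 * r))) with (r * r - Y ^ 2 / (4 * (r * r))) by (field; lra).
    rewrite Hrr. replace (Y ^ 2) with (m * m - X ^ 2) by lra. field. lra.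
  - field. lra.
Qed.

Lemma crossing_root (g : R -> R) a b : (forall s, 0 < s < 1 -> continuity_pt g s) ->
  0 < a < 1 -> 0 < b < 1 -> g a < 0 -> 0 < g b -> exists z, 0 < z < 1 /\ g z = 0.
Proof.
  intros Hc Ha Hb Hga Hgb.
  destruct (Rtotal_order a b) as [Hlt|[->|Hgt]]; [| lra |].
  - destruct (IVT_interv g a b) as [z [Hz Hgz]]; auto; [intros; apply Hc; lra|].
    exists z; split; [lra|auto].
  - destruct (IVT_interv (fun u => - g u) b a) as [z [Hz Hgz]]; auto; try lra.
    + intros; apply continuity_pt_opp, Hc; lra.
    + exists z; split; [lra|]. lra.
Qed.

Lemma nonvanishing_same_sign (g : R -> R) s1 s2 : (forall s, 0 < s < 1 -> continuity_pt g s) ->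
  (forall s, 0 < s < 1 -> g s <> 0) -> 0 < s1 < 1 -> 0 < s2 < 1 -> 0 < g s1 * g s2.
Proof.
  intros Hc Hnz H1 H2.
  pose proof (Hnz s1 H1). pose proof (Hnz s2 H2).
  destruct (Rlt_or_le 0 (g s1 * g s2)) as [|Hle]; auto. exfalso.
  assert (Hcross : (g s1 < 0 /\ 0 < g s2) \/ (g s2 < 0 /\ 0 < g s1)).
  { destruct (Rlt_or_le (g s1) 0); destruct (Rlt_or_le (g s2) 0); [nra| |  |nra]; lra. }
  destruct Hcross as [[Ha Hb]|[Ha Hb]].
  - destruct (crossing_root g s1 s2) as [z [Hz Hgz]]; auto. exact (Hnz z Hz Hgz).
  - destruct (crossing_root g s2 s1) as [z [Hz Hgz]]; auto. exact (Hnz z Hz Hgz).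
Qed.

(* A continuous square root h of g^2 on (0,1), where Re g > 0, is g or -g: Re h never
   vanishes, so the sign h = +-g cannot change. *)
Lemma continuous_branch (h g : R -> Cpx) :
  (forall s, 0 < s < 1 -> continuity_pt (fun u => fst (h u)) s) ->
  (forall s, 0 < s < 1 -> 0 < fst (g s)) ->
  (forall s, 0 < s < 1 -> Cmul (h s) (h s) = Cmul (g s) (g s)) ->
  (forall s, 0 < s < 1 -> h s = g s) \/ (forall s, 0 < s < 1 -> h s = Copp (g s)).
Proof.
  intros Hc Hg Hsq.
  assert (Hcase : forall s, 0 < s < 1 -> h s = g s \/ h s = Copp (g s))
    by (intros; apply Csq_eq_cases; auto).
  assert (Hnz : forall s, 0 < s < 1 -> fst (h s) <> 0).
  { intros s Hs. pose proof (Hg s Hs). destruct (Hcase s Hs) as [->| ->]; simpl; lra. }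
  assert (Hsign : forall s, 0 < s < 1 -> 0 < fst (h (1/2)) * fst (h s))
    by (intros; apply (nonvanishing_same_sign (fun u => fst (h u))); auto; lra).
  pose proof (Hg (1/2) ltac:(lra)) as Hg2.
  destruct (Hcase (1/2) ltac:(lra)) as [E|E]; [left|right]; intros s Hs;
    pose proof (Hsign s Hs) as Hss; pose proof (Hg s Hs);
    destruct (Hcase s Hs) as [E'|E']; auto; exfalso;
    rewrite E, E' in Hss; simpl in Hss; nra.
Qed.

Lemma components_Cmul_continuous (h : R -> Cpx) (w : Cpx) s :
  continuity_pt (fun u => fst (h u)) s -> continuity_pt (fun u => snd (h u)) s ->
  continuity_pt (fun u => fst (Cmul (h u) w)) s /\ continuity_pt (fun u => snd (Cmul (h u) w)) s.
Proof.
  intros H1 H2. unfold Cmul; cbn [fst snd].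
  assert (Hw : forall r : R, continuity_pt (fun _ => r) s)
    by (intros; apply continuity_pt_const; intros ? ?; reflexivity).
  split; [apply continuity_pt_minus | apply continuity_pt_plus]; apply continuity_pt_mult; auto.
Qed.

Definition Caff (m l z : Cpx) : Cpx := Cadd m (Cmul l z).

Lemma Caff_segment m l p q s :
  Caff m l (Cadd p (Cscale s (Csub q p))) =
  Cadd (Caff m l p) (Cscale s (Csub (Caff m l q) (Caff m l p))).
Proof. unfold Caff. rewrite !Cscale_RC. ring. Qed.

Lemma integrand_affine a1 a2 a3 b t m l : l <> C0 ->
  integrand (Caff m l a1) (Caff m l a2) (Caff m l a3) (Caff m l b) (Caff m l t) =
  Cdiv (integrand a1 a2 a3 b t) (Cmul l l).
Proof.
  intros Hl. unfold integrand, Caff, Cdiv.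
  set (D := Cmul (Cmul (Csub t a1) (Csub t a2)) (Csub t a3)).
  replace (Cmul (Cmul (Csub (Cadd m (Cmul l t)) (Cadd m (Cmul l a1)))
                      (Csub (Cadd m (Cmul l t)) (Cadd m (Cmul l a2))))
                (Csub (Cadd m (Cmul l t)) (Cadd m (Cmul l a3))))
    with (Cmul (Cmul (Cmul l l) l) D) by (unfold D; ring).
  rewrite Cinv_mul. set (iD := Cinv D). field; auto.
Qed.

Lemma integrand_conj a1 a2 a3 b t :
  integrand (Cconj a1) (Cconj a2) (Cconj a3) (Cconj b) (Cconj t) = Cconj (integrand a1 a2 a3 b t).
Proof. unfold integrand. rewrite Cconj_div, !Cconj_mul, !Cconj_sub. reflexivity. Qed.

(* Invariance under affine maps: dividing the branch by l is compensated by the factor l of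
   the new direction, so the real integrand functions do not change at all. *)
Lemma segment_integral_real_affine a1 a2 a3 b p q m l : l <> C0 ->
  segment_integral_real a1 a2 a3 b p q ->
  segment_integral_real (Caff m l a1) (Caff m l a2) (Caff m l a3) (Caff m l b)
    (Caff m l p) (Caff m l q).
Proof.
  intros Hl [h [Hc [Hsq [[L HL] Him]]]].
  assert (Hdir : forall s, Cmul (Cdiv (h s) l) (Csub (Caff m l q) (Caff m l p)) = Cmul (h s) (Csub q p))
    by (intros; unfold Caff; field; auto).
  exists (fun s => Cdiv (h s) l). split; [|split; [|split]].
  - intros s Hs. destruct (Hc s Hs). now apply components_Cmul_continuous.
  - intros s Hs. rewrite <- Caff_segment, integrand_affine, <- Hsq by auto. field; auto.
  - exists L. rewrite improper_int_iff in *.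
    apply (improper01_ext (fun s => fst (Cmul (h s) (Csub q p)))); auto.
    intros; rewrite Hdir; auto.
  - rewrite improper_int_iff in *.
    apply (improper01_ext (fun s => snd (Cmul (h s) (Csub q p)))); auto.
    intros; rewrite Hdir; auto.
Qed.

(* Invariance under conjugation: the imaginary part changes sign, the real part does not. *)
Lemma segment_integral_real_conj a1 a2 a3 b p q :
  segment_integral_real a1 a2 a3 b p q ->
  segment_integral_real (Cconj a1) (Cconj a2) (Cconj a3) (Cconj b) (Cconj p) (Cconj q).
Proof.
  intros [h [Hc [Hsq [[L HL] Him]]]].
  assert (Hdir : forall s, Cmul (Cconj (h s)) (Csub (Cconj q) (Cconj p)) = Cconj (Cmul (h s) (Csub q p)))
    by (intros; rewrite Cconj_mul, Cconj_sub; reflexivity).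
  exists (fun s => Cconj (h s)). split; [|split; [|split]].
  - intros s Hs. destruct (Hc s Hs). split; [auto|]. now apply continuity_pt_opp.
  - intros s Hs. rewrite <- Cconj_mul, Hsq, <- integrand_conj by auto.
    f_equal. rewrite !Cscale_RC, Cconj_add, Cconj_mul, Cconj_sub, Cconj_RC. reflexivity.
  - exists L. rewrite improper_int_iff in *.
    apply (improper01_ext (fun s => fst (Cmul (h s) (Csub q p)))); auto.
    intros; rewrite Hdir; auto.
  - rewrite improper_int_iff in *. replace 0 with (-1 * 0) by ring.
    apply (improper01_ext (fun s => -1 * snd (Cmul (h s) (Csub q p)))).
    + intros; rewrite Hdir; simpl; ring.
    + now apply improper01_scal.
Qed.

(* Since affine maps and conjugation are invertible, both invariances are equivalences. *)
Lemma segment_integral_real_affine_iff a1 a2 a3 b p q m l : l <> C0 ->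
  segment_integral_real a1 a2 a3 b p q <->
  segment_integral_real (Caff m l a1) (Caff m l a2) (Caff m l a3) (Caff m l b)
    (Caff m l p) (Caff m l q).
Proof.
  intros Hl. split; [now apply segment_integral_real_affine|].
  intros H. set (li := Cinv l). set (mi := Copp (Cmul li m)).
  assert (Hli : li <> C0).
  { intro E. apply Hl. replace l with (Cmul (Cmul l l) li) by (unfold li; field; auto).
    rewrite E. ring. }
  assert (Hinv : forall z, Caff mi li (Caff m l z) = z) by (intros; unfold Caff, mi, li; field; auto).
  apply (segment_integral_real_affine _ _ _ _ _ _ mi li Hli) in H. rewrite !Hinv in H. exact H.
Qed.

Lemma segment_integral_real_conj_iff a1 a2 a3 b p q :
  segment_integral_real a1 a2 a3 b p q <->
  segment_integral_real (Cconj a1) (Cconj a2) (Cconj a3) (Cconj b) (Cconj p) (Cconj q).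
Proof.
  split; [apply segment_integral_real_conj|].
  intros H. apply segment_integral_real_conj in H. rewrite !Cconj_involutive in H. exact H.
Qed.

Lemma segment_integral_real_vertices a1 a2 a3 c1 c2 c3 b p q :
  (forall t, Cmul (Cmul (Csub t a1) (Csub t a2)) (Csub t a3) =
             Cmul (Cmul (Csub t c1) (Csub t c2)) (Csub t c3)) ->
  segment_integral_real a1 a2 a3 b p q -> segment_integral_real c1 c2 c3 b p q.
Proof.
  intros Hprod. unfold segment_integral_real.
  replace (integrand c1 c2 c3 b) with (integrand a1 a2 a3 b); auto.
  apply functional_extensionality; intros t. unfold integrand. rewrite Hprod. reflexivity.
Qed.

(* (r, i)^2 = (X, -y0) * (ur, ui): (r, i) is a square root of a point of the line
   X |-> (X, -y0) * (ur, ui).  For y0 > 0 and ui > 0 this line meets the real axis only at a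
   positive point, so its principal square roots vary nicely with X. *)
Definition squares_on_line (X y0 ur ui r i : R) : Prop :=
  r ^ 2 - i ^ 2 = X * ur + y0 * ui /\ 2 * r * i = X * ui - y0 * ur.

Section SquareRootsOnALine.
Variables (y0 ur ui : R).
Hypotheses (Hy : 0 < y0) (Hu : 0 < ui).

(* The key estimate: for r > 0 the quantity ui r - ur i, proportional to the derivative of
   i in X, is positive and at least |(r, i)| ui / 2. *)
Lemma sqrt_line_transversal X r i : 0 < r -> squares_on_line X y0 ur ui r i ->
  0 < ui * r - ur * i /\ (r ^ 2 + i ^ 2) * ui ^ 2 <= 4 * (ui * r - ur * i) ^ 2.
Proof.
  intros Hr [E1 E2].
  set (P := i * X + r * y0). set (Q := ui * r - ur * i). set (N := r ^ 2 + i ^ 2).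
  set (W2 := X ^ 2 + y0 ^ 2).
  assert (HP : 2 * r * P = W2 * ui + N * y0).
  { assert (H : 2*r*P - (W2*ui + N*y0) = X*(2*r*i - (X*ui - y0*ur)) + y0*((r^2-i^2) - (X*ur + y0*ui)))
      by (unfold P, W2, N; ring).
    rewrite E1, E2 in H. lra. }
  assert (HQ : Q * W2 = N * P).
  { assert (H : Q * W2 - N * P = ((X*ur + y0*ui) - (r^2 - i^2)) * (y0*r - X*i)
                   + ((X*ui - y0*ur) - 2*r*i) * (X*r + y0*i)) by (unfold Q, W2, N, P; ring).
    rewrite E1, E2 in H. lra. }
  assert (HW : 0 < W2) by (unfold W2; nra).
  assert (HN : 0 < N) by (unfold N; nra).
  assert (HPp : 0 < P) by nra.
  assert (HQp : 0 < Q) by nra.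
  split; auto.
  assert (H1 : N * ui <= 2 * r * Q).
  { apply Rmult_le_reg_r with W2; auto.
    replace (2 * r * Q * W2) with (N * (2 * r * P))
      by (transitivity (2 * r * (N * P)); [ring|]; rewrite <- HQ; ring).
    rewrite HP. nra. }
  assert (H2 : r ^ 2 <= N) by (unfold N; nra).
  assert (H3 : 0 <= (2 * r * Q - N * ui) * (2 * r * Q + N * ui)) by (apply Rmult_le_pos; nra).
  assert (H4 : N ^ 2 * ui ^ 2 <= 4 * r ^ 2 * Q ^ 2) by nra.
  assert (H5 : 4 * r ^ 2 * Q ^ 2 <= 4 * N * Q ^ 2) by (apply Rmult_le_compat_r; nra).
  apply Rmult_le_reg_l with N; nra.
Qed.

Lemma sqrt_line_difference X1 X2 r1 i1 r2 i2 :
  squares_on_line X1 y0 ur ui r1 i1 -> squares_on_line X2 y0 ur ui r2 i2 ->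
  (i1 - i2) * ((r1 + r2) ^ 2 + (i1 + i2) ^ 2) =
  (X1 - X2) * ((ui * r1 - ur * i1) + (ui * r2 - ur * i2)).
Proof.
  intros [E1 E2] [E3 E4].
  transitivity ((2*r1*i1 - 2*r2*i2) * (r1 + r2) - ((r1^2 - i1^2) - (r2^2 - i2^2)) * (i1 + i2));
    [ring|]. rewrite E1, E2, E3, E4. ring.
Qed.

Lemma sqrt_line_im_increasing X1 X2 r1 i1 r2 i2 : 0 < r1 -> 0 < r2 ->
  squares_on_line X1 y0 ur ui r1 i1 -> squares_on_line X2 y0 ur ui r2 i2 ->
  X2 < X1 -> i2 < i1.
Proof.
  intros Hr1 Hr2 H1 H2 HX.
  destruct (sqrt_line_transversal X1 r1 i1 Hr1 H1) as [Q1 _].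
  destruct (sqrt_line_transversal X2 r2 i2 Hr2 H2) as [Q2 _].
  pose proof (sqrt_line_difference X1 X2 r1 i1 r2 i2 H1 H2) as E.
  assert (HS : 0 < (r1 + r2) ^ 2 + (i1 + i2) ^ 2)
    by (apply Rplus_lt_le_0_compat; [apply pow_lt|apply pow2_ge_0]; lra).
  assert (0 < (X1 - X2) * ((ui * r1 - ur * i1) + (ui * r2 - ur * i2)))
    by (apply Rmult_lt_0_compat; lra).
  nra.
Qed.

Lemma sqrt_line_im_lipschitz X1 X2 r1 i1 r2 i2 : 0 < r1 -> 0 < r2 ->
  squares_on_line X1 y0 ur ui r1 i1 -> squares_on_line X2 y0 ur ui r2 i2 ->
  (i1 - i2) ^ 2 * ((r1 ^ 2 + i1 ^ 2) * ui ^ 2) <= 4 * (X1 - X2) ^ 2 * (ur ^ 2 + ui ^ 2) ^ 2.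
Proof.
  intros Hr1 Hr2 H1 H2.
  destruct (sqrt_line_transversal X1 r1 i1 Hr1 H1) as [Q1 B1].
  destruct (sqrt_line_transversal X2 r2 i2 Hr2 H2) as [Q2 _].
  destruct H1 as [E1 E2], H2 as [E3 E4].
  set (sr := r1 + r2). set (si := i1 + i2). set (mr := r1 - r2). set (mi := i1 - i2).
  set (d := X1 - X2). set (U2 := ur ^ 2 + ui ^ 2).
  assert (Hre : mr * sr - mi * si = d * ur).
  { transitivity ((r1^2 - i1^2) - (r2^2 - i2^2)); [unfold mr, sr, mi, si; ring|].
    rewrite E1, E3. unfold d; ring. }
  assert (Him : mr * si + mi * sr = d * ui).
  { transitivity (2*r1*i1 - 2*r2*i2); [unfold mr, sr, mi, si; ring|].
    rewrite E2, E4. unfold d; ring. }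
  assert (Hms : (mr ^ 2 + mi ^ 2) * (sr ^ 2 + si ^ 2) = d ^ 2 * U2).
  { transitivity ((mr * sr - mi * si) ^ 2 + (mr * si + mi * sr) ^ 2); [ring|].
    rewrite Hre, Him. unfold U2; ring. }
  assert (CS : (ui * sr - ur * si) ^ 2 <= U2 * (sr ^ 2 + si ^ 2)).
  { assert (U2 * (sr^2 + si^2) - (ui * sr - ur * si)^2 = (ui * si + ur * sr)^2) by (unfold U2; ring).
    pose proof (pow2_ge_0 (ui * si + ur * sr)); lra. }
  set (Q := ui * r1 - ur * i1) in *.
  assert (HQ2 : Q ^ 2 <= U2 * (sr ^ 2 + si ^ 2)).
  { replace (ui * sr - ur * si) with (Q + (ui * r2 - ur * i2)) in CS by (unfold Q, sr, si; ring).
    nra. }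
  set (S := sr ^ 2 + si ^ 2) in *.
  assert (HS : 0 <= S) by (unfold S; nra).
  set (N := r1 ^ 2 + i1 ^ 2) in *.
  assert (HN : 0 <= N) by (unfold N; nra).
  assert (A1 : mi ^ 2 * (N * ui ^ 2) <= mi ^ 2 * (4 * Q ^ 2)) by (apply Rmult_le_compat_l; nra).
  assert (A2 : mi ^ 2 * (4 * Q ^ 2) <= (mr ^ 2 + mi ^ 2) * (4 * (U2 * S)))
    by (apply Rmult_le_compat; nra).
  replace ((mr ^ 2 + mi ^ 2) * (4 * (U2 * S))) with (4 * U2 * ((mr ^ 2 + mi ^ 2) * S)) in A2 by ring.
  rewrite Hms in A2. fold d U2. nra.
Qed.

End SquareRootsOnALine.

Lemma Rabs_le_of_pow4_le y K : 0 <= K -> y ^ 4 <= K -> Rabs y <= 1 + K.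
Proof.
  intros HK H. apply Rnot_lt_le. intro Hlt.
  set (z := Rabs y) in *.
  assert (Hz2 : z ^ 2 = y ^ 2) by (unfold z; rewrite <- Rsqr_pow2, <- Rsqr_abs, Rsqr_pow2; auto).
  assert (z ^ 4 = y ^ 4) by (replace (z ^ 4) with ((z ^ 2) ^ 2) by ring; rewrite Hz2; ring).
  assert (z < z ^ 2) by nra. assert (z ^ 2 < z ^ 4) by nra. lra.
Qed.

Lemma Rabs_le_of_sq_le m d C : 0 <= C -> m ^ 2 <= d ^ 2 * C -> Rabs m <= Rabs d * (1 + C).
Proof.
  intros HC H. apply Rnot_lt_le. intro Hlt.
  assert (Hm2 : Rabs m ^ 2 = m ^ 2) by (rewrite <- Rsqr_pow2, <- Rsqr_abs, Rsqr_pow2; auto).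
  assert (Hd2 : Rabs d ^ 2 = d ^ 2) by (rewrite <- Rsqr_pow2, <- Rsqr_abs, Rsqr_pow2; auto).
  pose proof (Rabs_pos d). pose proof (Rabs_pos m).
  assert ((Rabs d * (1 + C)) ^ 2 < Rabs m ^ 2)
    by (assert (0 <= Rabs d * (1 + C)) by (apply Rmult_le_pos; lra); nra).
  assert (d ^ 2 * C <= (Rabs d * (1 + C)) ^ 2).
  { rewrite <- Hd2. pose proof (pow2_ge_0 (Rabs d)). pose proof (pow2_ge_0 C). nra. }
  lra.
Qed.

(* The normalized problem: side [0,1], apex alpha = a + i e with e > 0, and candidate points
   w = x + i y0 on the parallel Im w = y0 > 0.  For s in (0,1), the quotient
   G(s) = (s - w)/(s - alpha) = (s - x - i y0) u(s) with u(s) = 1/(s - alpha). *)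
Section NormalizedProblem.
Variables (a e y0 : R).
Hypotheses (He : 0 < e) (Hy : 0 < y0).

Definition apex_dist2 (s : R) : R := (s - a) ^ 2 + e ^ 2.
Definition inv_re (s : R) : R := (s - a) / apex_dist2 s.
Definition inv_im (s : R) : R := e / apex_dist2 s.
Definition Gre (x s : R) : R := (s - x) * inv_re s + y0 * inv_im s.
Definition Gim (x s : R) : R := (s - x) * inv_im s - y0 * inv_re s.
Definition sigma (x s : R) : Cpx := Csqrt (Gre x s, Gim x s).
Definition rho (x s : R) : R := fst (sigma x s).
Definition iota (x s : R) : R := snd (sigma x s).

Lemma apex_dist2_pos s : 0 < apex_dist2 s.
Proof. unfold apex_dist2; apply Rplus_le_lt_0_compat; [apply pow2_ge_0|apply pow_lt; lra]. Qed.

Lemma inv_im_pos s : 0 < inv_im s.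
Proof. unfold inv_im; apply Rdiv_lt_0_compat; auto; apply apex_dist2_pos. Qed.

Lemma quotient_components x s :
  Cdiv (Csub (RC s) (x, y0)) (Csub (RC s) (a, e)) = (Gre x s, Gim x s).
Proof.
  pose proof (apex_dist2_pos s) as Hn. unfold Gre, Gim, inv_re, inv_im, apex_dist2 in *.
  apply Cpx_eq; cbn; field; lra.
Qed.

Lemma quotient_off_branch_cut x s : 0 < Cnorm (Gre x s, Gim x s) + Gre x s.
Proof.
  apply Csqrt_domain. cbn [fst snd].
  destruct (Req_dec (Gim x s) 0) as [H|H]; [right|left; auto].
  pose proof (apex_dist2_pos s) as Hn.
  unfold Gre, Gim, inv_re, inv_im in *. set (n := apex_dist2 s) in *.
  assert (H' : (s - x) * e = y0 * (s - a)).
  { assert (E : (s - x) * e - y0 * (s - a) = ((s - x) * (e / n) - y0 * ((s - a) / n)) * n)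
      by (field; lra).
    rewrite H, Rmult_0_l in E. lra. }
  apply Rmult_lt_reg_r with (e * n); [apply Rmult_lt_0_compat; lra|]. rewrite Rmult_0_l.
  replace (((s - x) * ((s - a) / n) + y0 * (e / n)) * (e * n))
    with ((s - x) * e * (s - a) + y0 * e * e) by (field; lra).
  rewrite H'. replace (y0 * (s - a) * (s - a) + y0 * e * e) with (y0 * ((s - a) ^ 2 + e ^ 2)) by ring.
  apply Rmult_lt_0_compat; [lra|apply apex_dist2_pos].
Qed.

(* sigma = sqrt G is a square root of a point of the line X |-> (X - i y0) u(s), X = s - x. *)
Lemma sigma_spec x s : 0 < rho x s /\
  Cmul (sigma x s) (sigma x s) = (Gre x s, Gim x s) /\
  squares_on_line (s - x) y0 (inv_re s) (inv_im s) (rho x s) (iota x s).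
Proof.
  destruct (Csqrt_spec _ (quotient_off_branch_cut x s)) as [Hr Hsq].
  fold (sigma x s) in Hr, Hsq. split; [exact Hr|]. split; [exact Hsq|].
  unfold rho, iota. destruct (sigma x s) as [r i]. cbn [fst snd].
  unfold Cmul in Hsq; cbn [fst snd] in Hsq. injection Hsq as E1 E2.
  split; [replace (r ^ 2 - i ^ 2) with (r * r - i * i) by ring; rewrite E1
         |replace (2 * r * i) with (r * i + i * r) by ring; rewrite E2]; unfold Gre, Gim; ring.
Qed.

Lemma sigma_modulus x s :
  (rho x s ^ 2 + iota x s ^ 2) ^ 2 = ((s - x) ^ 2 + y0 ^ 2) / apex_dist2 s.
Proof.
  destruct (sigma_spec x s) as [_ [_ [E1 E2]]].
  transitivity ((rho x s ^ 2 - iota x s ^ 2) ^ 2 + (2 * rho x s * iota x s) ^ 2); [ring|].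
  rewrite E1, E2. pose proof (apex_dist2_pos s). unfold inv_re, inv_im, apex_dist2 in *. field. lra.
Qed.

(* sigma depends continuously on s, as G stays off the branch cut. *)
Lemma rho_continuous x s : continuity_pt (rho x) s.
Proof.
  pose proof (quotient_off_branch_cut x s) as Hg. pose proof (apex_dist2_pos s) as Hn.
  unfold rho, sigma, Csqrt, Cnorm, Gre, Gim, inv_re, inv_im, apex_dist2 in *; cbn [fst snd] in *.
  reg; try lra; try (apply Rgt_not_eq; lra).
  apply Rplus_le_le_0_compat; apply pow2_ge_0.
Qed.

Lemma iota_continuous x s : continuity_pt (iota x) s.
Proof.
  destruct (sigma_spec x s) as [Hr _].
  assert (Hrho := rho_continuous x).
  unfold iota, sigma, Csqrt; cbn [snd].
  apply continuity_pt_div.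
  - pose proof (apex_dist2_pos s) as Hn. unfold Gim, inv_re, inv_im, apex_dist2 in *.
    reg; apply Rgt_not_eq; lra.
  - apply continuity_pt_mult; [apply continuity_pt_const; intros ? ?; reflexivity|].
    apply Hrho.
  - unfold rho, sigma, Csqrt in Hr. cbn [fst] in *. apply Rgt_not_eq. lra.
Qed.

Definition branch_re (x s : R) : R := rho x s * weight s.
Definition branch_im (x s : R) : R := iota x s * weight s.

Lemma branch_re_cont01 x : cont01 (branch_re x).
Proof. intros s Hs. apply continuity_pt_mult; [apply rho_continuous|apply weight_cont01; auto]. Qed.

Lemma branch_im_cont01 x : cont01 (branch_im x).
Proof. intros s Hs. apply continuity_pt_mult; [apply iota_continuous|apply weight_cont01; auto]. Qed.

(* sigma is bounded on (0,1), so the branch is dominated by a multiple of the weight. *)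
Definition sigma_bound (x : R) : R := 1 + (2 + 2 * x ^ 2 + y0 ^ 2) / e ^ 2.

Lemma sigma_bounded x s : 0 < s < 1 ->
  Rabs (rho x s) <= sigma_bound x /\ Rabs (iota x s) <= sigma_bound x.
Proof.
  intros Hs. pose proof (sigma_modulus x s) as HN.
  set (r := rho x s) in *. set (i := iota x s) in *.
  pose proof (apex_dist2_pos s) as Hn.
  assert (Hnv : e ^ 2 <= apex_dist2 s) by (unfold apex_dist2; pose proof (pow2_ge_0 (s - a)); lra).
  assert (He2 : 0 < e ^ 2) by (apply pow_lt; lra).
  set (K := (2 + 2 * x ^ 2 + y0 ^ 2) / e ^ 2).
  assert (HK0 : 0 <= K) by (unfold K; apply Rmult_le_pos; [nra|apply Rlt_le, Rinv_0_lt_compat; auto]).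
  assert (HW : (s - x) ^ 2 + y0 ^ 2 <= 2 + 2 * x ^ 2 + y0 ^ 2)
    by (pose proof (pow2_ge_0 (s + x)); nra).
  assert (HNK : (r ^ 2 + i ^ 2) ^ 2 <= K).
  { rewrite HN. unfold K. apply (Rle_trans _ (((s - x) ^ 2 + y0 ^ 2) / e ^ 2)).
    - apply Rmult_le_compat_l; [pose proof (pow2_ge_0 (s - x)); pose proof (pow2_ge_0 y0); lra|].
      apply Rinv_le_contravar; auto.
    - apply Rmult_le_compat_r; [apply Rlt_le, Rinv_0_lt_compat|]; auto. }
  unfold sigma_bound. fold K. split; apply Rabs_le_of_pow4_le; auto; nra.
Qed.

Lemma branch_re_dominated x s : 0 < s < 1 -> Rabs (branch_re x s) <= sigma_bound x * weight s.
Proof.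
  intros Hs. unfold branch_re.
  rewrite Rabs_mult, (Rabs_pos_eq (weight s)) by (apply Rlt_le, weight_pos; auto).
  apply Rmult_le_compat_r; [apply Rlt_le, weight_pos; auto | apply sigma_bounded; auto].
Qed.

Lemma branch_im_dominated x s : 0 < s < 1 -> Rabs (branch_im x s) <= sigma_bound x * weight s.
Proof.
  intros Hs. unfold branch_im.
  rewrite Rabs_mult, (Rabs_pos_eq (weight s)) by (apply Rlt_le, weight_pos; auto).
  apply Rmult_le_compat_r; [apply Rlt_le, weight_pos; auto | apply sigma_bounded; auto].
Qed.

(* Moving w to the right along the parallel decreases Im sigma (X = s - x decreases). *)
Lemma iota_decreasing x1 x2 s : x1 < x2 -> iota x2 s < iota x1 s.
Proof.
  intros Hx. destruct (sigma_spec x1 s) as [Hr1 [_ H1]]. destruct (sigma_spec x2 s) as [Hr2 [_ H2]].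
  apply (sqrt_line_im_increasing y0 (inv_re s) (inv_im s) Hy (inv_im_pos s) (s - x1) (s - x2)
    (rho x1 s) _ (rho x2 s)); auto. lra.
Qed.

(* Im sigma has the sign of Im G, since Re sigma > 0. *)
Lemma iota_sign x s : 2 * rho x s * iota x s = Gim x s.
Proof. destruct (sigma_spec x s) as [_ [_ [_ E]]]. exact E. Qed.

(* At the point of the parallel on the side [0, alpha], Im G > 0 on (0,1); at the point on
   the side [1, alpha], Im G < 0. *)
Lemma iota_pos_left_end s : y0 < e -> 0 < s < 1 -> 0 < iota (y0 * a / e) s.
Proof.
  intros Hye Hs. destruct (sigma_spec (y0 * a / e) s) as [Hr _].
  pose proof (iota_sign (y0 * a / e) s) as E.
  assert (HG : Gim (y0 * a / e) s = s * (e - y0) / apex_dist2 s)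
    by (pose proof (apex_dist2_pos s); unfold Gim, inv_re, inv_im; field; lra).
  assert (0 < s * (e - y0) / apex_dist2 s) by (apply Rdiv_lt_0_compat; [nra|apply apex_dist2_pos]).
  nra.
Qed.

Lemma iota_neg_right_end s : y0 < e -> 0 < s < 1 -> iota (y0 * a / e + 1 - y0 / e) s < 0.
Proof.
  intros Hye Hs. destruct (sigma_spec (y0 * a / e + 1 - y0 / e) s) as [Hr _].
  pose proof (iota_sign (y0 * a / e + 1 - y0 / e) s) as E.
  assert (HG : Gim (y0 * a / e + 1 - y0 / e) s = - ((1 - s) * (e - y0) / apex_dist2 s))
    by (pose proof (apex_dist2_pos s); unfold Gim, inv_re, inv_im; field; lra).
  assert (0 < (1 - s) * (e - y0) / apex_dist2 s) by (apply Rdiv_lt_0_compat; [nra|apply apex_dist2_pos]).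
  nra.
Qed.

(* |sigma|^2 = |G| is bounded below on (0,1), which makes the Lipschitz constant uniform. *)
Lemma sigma_modulus_lower x s : 0 < s < 1 ->
  y0 / sqrt (2 + 2 * a ^ 2 + e ^ 2) <= rho x s ^ 2 + iota x s ^ 2.
Proof.
  intros Hs. pose proof (sigma_modulus x s) as HN. pose proof (apex_dist2_pos s) as Hn.
  set (Nm := 2 + 2 * a ^ 2 + e ^ 2).
  assert (HnNm : apex_dist2 s <= Nm) by (unfold apex_dist2, Nm; pose proof (pow2_ge_0 (s + a)); nra).
  assert (HNm : 0 < Nm) by lra.
  assert (Hsq : 0 < sqrt Nm) by (apply sqrt_lt_R0; auto).
  assert (Hlow : (y0 / sqrt Nm) ^ 2 <= (rho x s ^ 2 + iota x s ^ 2) ^ 2).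
  { replace ((y0 / sqrt Nm) ^ 2) with (y0 ^ 2 / (sqrt Nm * sqrt Nm)) by (field; lra).
    rewrite sqrt_sqrt by lra.
    rewrite HN. apply (Rle_trans _ (y0 ^ 2 / apex_dist2 s)).
    - apply Rmult_le_compat_l; [apply pow2_ge_0|]. apply Rinv_le_contravar; auto.
    - apply Rmult_le_compat_r; [apply Rlt_le, Rinv_0_lt_compat; auto|].
      pose proof (pow2_ge_0 (s - x)); lra. }
  assert (0 < y0 / sqrt Nm) by (apply Rdiv_lt_0_compat; auto).
  assert (0 <= rho x s ^ 2 + iota x s ^ 2) by nra.
  nra.
Qed.

Definition lipschitz_const : R := 1 + 4 * sqrt (2 + 2 * a ^ 2 + e ^ 2) / (y0 * e ^ 2).

Lemma lipschitz_const_pos : 0 < lipschitz_const.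
Proof.
  unfold lipschitz_const. pose proof (sqrt_pos (2 + 2 * a ^ 2 + e ^ 2)).
  assert (0 < y0 * e ^ 2) by (apply Rmult_lt_0_compat; auto; apply pow_lt; auto).
  assert (0 <= 4 * sqrt (2 + 2 * a ^ 2 + e ^ 2) / (y0 * e ^ 2))
    by (apply Rmult_le_pos; [lra|apply Rlt_le, Rinv_0_lt_compat; auto]).
  lra.
Qed.

Lemma iota_lipschitz x1 x2 s : 0 < s < 1 ->
  Rabs (iota x1 s - iota x2 s) <= lipschitz_const * Rabs (x1 - x2).
Proof.
  intros Hs.
  destruct (sigma_spec x1 s) as [Hr1 [_ H1]]. destruct (sigma_spec x2 s) as [Hr2 [_ H2]].
  pose proof (sqrt_line_im_lipschitz y0 (inv_re s) (inv_im s) Hy (inv_im_pos s)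
    _ _ _ _ _ _ Hr1 Hr2 H1 H2) as L.
  pose proof (sigma_modulus_lower x1 s Hs) as Hlow.
  set (i1 := iota x1 s) in *. set (i2 := iota x2 s) in *.
  set (N1 := rho x1 s ^ 2 + i1 ^ 2) in *.
  pose proof (apex_dist2_pos s) as Hn.
  assert (HU : inv_re s ^ 2 + inv_im s ^ 2 = / apex_dist2 s)
    by (unfold inv_re, inv_im, apex_dist2 in *; field; lra).
  rewrite HU in L. unfold inv_im in L. set (n := apex_dist2 s) in *.
  assert (L2 : (i1 - i2) ^ 2 * N1 * e ^ 2 <= 4 * (x1 - x2) ^ 2).
  { replace (s - x1 - (s - x2)) with (x2 - x1) in L by ring.
    apply Rmult_le_reg_r with ((/ n) ^ 2); [apply pow_lt, Rinv_0_lt_compat; auto|].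
    replace ((i1 - i2) ^ 2 * N1 * e ^ 2 * (/ n) ^ 2) with ((i1 - i2) ^ 2 * (N1 * (e / n) ^ 2))
      by (field; lra).
    replace (4 * (x1 - x2) ^ 2 * (/ n) ^ 2) with (4 * (x2 - x1) ^ 2 * (/ n) ^ 2) by ring.
    exact L. }
  set (n0 := y0 / sqrt (2 + 2 * a ^ 2 + e ^ 2)) in *.
  assert (Hn0 : 0 < n0) by (unfold n0; apply Rdiv_lt_0_compat; auto; apply sqrt_lt_R0; nra).
  assert (He2 : 0 < e ^ 2) by (apply pow_lt; lra).
  set (C := 4 / (n0 * e ^ 2)).
  assert (HC : 0 <= C) by (unfold C; apply Rlt_le, Rdiv_lt_0_compat; [lra|apply Rmult_lt_0_compat; auto]).
  assert (Hm : (i1 - i2) ^ 2 <= (x1 - x2) ^ 2 * C).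
  { unfold C. apply Rmult_le_reg_r with (n0 * e ^ 2); [apply Rmult_lt_0_compat; auto|].
    replace ((x1 - x2) ^ 2 * (4 / (n0 * e ^ 2)) * (n0 * e ^ 2)) with (4 * (x1 - x2) ^ 2)
      by (field; lra).
    assert (0 <= (i1 - i2) ^ 2 * e ^ 2) by (apply Rmult_le_pos; apply pow2_ge_0).
    nra. }
  replace lipschitz_const with (1 + C).
  - pose proof (Rabs_le_of_sq_le (i1 - i2) (x1 - x2) C HC Hm). lra.
  - unfold lipschitz_const, C, n0. field.
    split; [lra|split; [lra|]]. apply Rgt_not_eq, sqrt_lt_R0. nra.
Qed.

(* J x is the imaginary part of the integral along [0,1] for the branch with Re > 0. *)
Definition J (x : R) : R := epsilon (inhabits 0) (improper01 (branch_im x)).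

Lemma J_spec x : improper01 (branch_im x) (J x).
Proof.
  unfold J. apply epsilon_spec. apply (improper01_dominated_exists _ (sigma_bound x)).
  - apply branch_im_cont01.
  - apply branch_im_dominated.
Qed.

Lemma J_difference x1 x2 :
  improper01 (fun s => branch_im x1 s + -1 * branch_im x2 s) (J x1 + -1 * J x2).
Proof. apply improper01_lin; apply J_spec. Qed.

Lemma J_lipschitz x1 x2 :
  Rabs (J x1 - J x2) <= 4 * (lipschitz_const * Rabs (x1 - x2)).
Proof.
  replace (J x1 - J x2) with (J x1 + -1 * J x2) by ring.
  apply (improper01_dominated_bound _ _ _ (J_difference x1 x2)).
  intros s Hs. replace (branch_im x1 s + -1 * branch_im x2 s) with ((iota x1 s - iota x2 s) * weight s)
    by (unfold branch_im; ring).
  rewrite Rabs_mult, (Rabs_pos_eq (weight s)) by (apply Rlt_le, weight_pos; auto).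
  apply Rmult_le_compat_r; [apply Rlt_le, weight_pos; auto|]. apply iota_lipschitz; auto.
Qed.

Lemma J_continuous x : continuity_pt J x.
Proof.
  pose proof lipschitz_const_pos as HK.
  intros eps Heps. exists (eps / (4 * lipschitz_const + 1)).
  split; [apply Rdiv_lt_0_compat; lra|].
  intros x' [_ Hx']. simpl in *. unfold R_dist in *.
  eapply Rle_lt_trans; [apply J_lipschitz|].
  apply (Rle_lt_trans _ ((4 * lipschitz_const + 1) * Rabs (x' - x))).
  - pose proof (Rabs_pos (x' - x)). nra.
  - replace eps with ((4 * lipschitz_const + 1) * (eps / (4 * lipschitz_const + 1))) by (field; lra).
    apply Rmult_lt_compat_l; lra.
Qed.

Lemma J_decreasing x1 x2 : x1 < x2 -> J x2 < J x1.
Proof.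
  intros Hx.
  assert (Hpos : forall s, 0 < s < 1 -> 0 < branch_im x1 s + -1 * branch_im x2 s).
  { intros s Hs. unfold branch_im.
    pose proof (iota_decreasing x1 x2 s Hx). pose proof (weight_pos s Hs). nra. }
  pose proof (improper01_pos _ _ (cont01_plus_scal _ _ (-1) (branch_im_cont01 x1)
    (branch_im_cont01 x2)) Hpos (J_difference x1 x2)).
  lra.
Qed.

Lemma J_unique_root : y0 < e ->
  exists x, y0 * a / e <= x <= y0 * a / e + 1 - y0 / e /\ J x = 0 /\
    forall x', J x' = 0 -> x' = x.
Proof.
  intros Hye. set (xl := y0 * a / e). set (xr := y0 * a / e + 1 - y0 / e).
  assert (Hlr : xl < xr).
  { unfold xl, xr. assert (y0 / e < 1) by (apply Rmult_lt_reg_r with e; auto; field_simplify; lra).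
    lra. }
  assert (Hl : 0 < J xl).
  { apply (improper01_pos (branch_im xl)); [apply branch_im_cont01| |apply J_spec].
    intros s Hs. unfold branch_im.
    apply Rmult_lt_0_compat; [apply iota_pos_left_end|apply weight_pos]; auto. }
  assert (Hr : J xr < 0).
  { assert (0 < - J xr); [|lra].
    apply (improper01_pos (fun s => -1 * branch_im xr s)).
    - intros s Hs. apply continuity_pt_mult; [apply continuity_pt_const; intros ? ?; reflexivity|].
      apply branch_im_cont01; auto.
    - intros s Hs. unfold branch_im. pose proof (iota_neg_right_end s Hye Hs) as Hi. fold xr in Hi.
      pose proof (weight_pos s Hs). nra.
    - replace (- J xr) with (-1 * J xr) by ring. apply improper01_scal, J_spec. }
  destruct (IVT_interv (fun x => - J x) xl xr) as [x [Hx HJ]]; auto; try lra.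
  { intros; apply continuity_pt_opp, J_continuous. }
  exists x. split; [exact Hx|]. split; [lra|].
  intros x' Hx'. destruct (Rtotal_order x' x) as [H|[H|H]]; auto.
  - pose proof (J_decreasing x' x H). lra.
  - pose proof (J_decreasing x x' H). lra.
Qed.

Definition branch (x s : R) : Cpx := (branch_re x s, branch_im x s).

Lemma branch_square x s : 0 < s < 1 ->
  Cmul (branch x s) (branch x s) = integrand C0 C1 (a, e) (x, y0) (Cadd C0 (Cscale s (Csub C1 C0))).
Proof.
  intros Hs.
  transitivity (Cmul (RC (weight s * weight s)) (Cmul (sigma x s) (sigma x s))).
  { apply Cpx_eq; unfold branch, branch_re, branch_im, rho, iota; simpl; ring. }
  rewrite (proj1 (proj2 (sigma_spec x s))), <- quotient_components, weight_sq by auto.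
  replace (Cadd C0 (Cscale s (Csub C1 C0))) with (RC s) by (apply Cpx_eq; simpl; ring).
  replace (RC (/ (s * (1 - s)))) with (Cinv (Cmul (RC s) (Csub C1 (RC s))))
    by (apply Cpx_eq; simpl; field; split; nra).
  unfold integrand. field.
  repeat split; unfold RC, C0, C1, Csub; intro H; injection H; simpl; intros; lra.
Qed.

Lemma branch_re_pos x s : 0 < s < 1 -> 0 < fst (branch x s).
Proof.
  intros Hs. unfold branch, branch_re; cbn [fst].
  apply Rmult_lt_0_compat; [apply sigma_spec | apply weight_pos; auto].
Qed.

Lemma along_unit_segment (z : Cpx) : Cmul z (Csub C1 C0) = z.
Proof. apply Cpx_eq; simpl; ring. Qed.

(* The normalized theorem: the segment integral is real exactly at the zero of J, since
   every continuous branch is +-branch. *)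
Lemma normalized_real_iff x :
  segment_integral_real C0 C1 (a, e) (x, y0) C0 C1 <-> J x = 0.
Proof.
  split.
  - intros [h [Hc [Hsq [_ Him]]]]. rewrite improper_int_iff in Him.
    destruct (continuous_branch h (branch x)) as [Hh|Hh].
    + intros s Hs. apply Hc; auto.
    + apply branch_re_pos.
    + intros s Hs. rewrite Hsq, branch_square; auto.
    + apply (improper01_unique (branch_im x)); [apply J_spec|].
      apply (improper01_ext (fun s => snd (Cmul (h s) (Csub C1 C0)))); [|exact Him].
      intros s Hs. rewrite along_unit_segment, Hh; auto.
    + apply (improper01_unique (branch_im x)); [apply J_spec|].
      replace 0 with (-1 * 0) by ring.
      apply (improper01_ext (fun s => -1 * snd (Cmul (h s) (Csub C1 C0)))).
      * intros s Hs. rewrite along_unit_segment, Hh; auto. simpl; ring.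
      * now apply improper01_scal.
  - intros HJ. exists (branch x). split; [|split; [|split]].
    + intros s Hs. split; [apply branch_re_cont01 | apply branch_im_cont01]; auto.
    + apply branch_square.
    + destruct (improper01_dominated_exists _ _ (branch_re_cont01 x) (branch_re_dominated x)) as [L HL].
      exists L. rewrite improper_int_iff.
      apply (improper01_ext (branch_re x)); auto.
      intros; rewrite along_unit_segment; reflexivity.
    + rewrite improper_int_iff, <- HJ. apply (improper01_ext (branch_im x)); [|apply J_spec].
      intros; rewrite along_unit_segment; reflexivity.
Qed.

End NormalizedProblem.

Lemma noncollinear_base p q c : noncollinear p q c -> Csub q p <> C0.
Proof.
  unfold noncollinear. intros Hnc E. apply Hnc. unfold Csub, C0 in E. injection E as E1 E2.
  rewrite E1, E2. ring.
Qed.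

Lemma normalized_apex_im p q c : noncollinear p q c ->
  snd (Cdiv (Csub c p) (Csub q p)) <> 0.
Proof.
  intros Hnc. pose proof (Cnorm2_neq0 _ (noncollinear_base p q c Hnc)) as Hn.
  unfold noncollinear in Hnc. unfold Cdiv, Cmul, Cinv, Csub in *; cbn [fst snd] in *.
  intro E. apply Hnc.
  replace ((fst q - fst p) * (snd c - snd p) - (snd q - snd p) * (fst c - fst p)) with
    (((fst c - fst p) * (- (snd q - snd p) / ((fst q - fst p) ^ 2 + (snd q - snd p) ^ 2)) +
      (snd c - snd p) * ((fst q - fst p) / ((fst q - fst p) ^ 2 + (snd q - snd p) ^ 2))) *
     ((fst q - fst p) ^ 2 + (snd q - snd p) ^ 2)) by (field; auto).
  rewrite E. ring.
Qed.

(* Normalization of a triangle p q c: an affine map, followed by a conjugation if needed,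
   sends p, q, c to 0, 1 and a + i e with e > 0, and the parallel through b = mp p + mq q + mc c
   to the horizontal line Im = mc e, parametrized compatibly. *)
Lemma triangle_normalization p q c b mp mq mc : noncollinear p q c -> mp + mq + mc = 1 ->
  b = Cadd (Cadd (Cscale mp p) (Cscale mq q)) (Cscale mc c) ->
  exists a e (N : Cpx -> Cpx), 0 < e /\
    (forall r, N (Cadd b (Cscale r (Csub q p))) = (mq + mc * a + r, mc * e)) /\
    (forall z, segment_integral_real p q c z p q <->
               segment_integral_real C0 C1 (a, e) (N z) C0 C1).
Proof.
  intros Hnc Hsum Hb.
  pose proof (noncollinear_base p q c Hnc) as Hd.
  set (l := Cinv (Csub q p)). set (m := Copp (Cmul l p)). set (T := Caff m l).
  assert (Hl : l <> C0).
  { intro E. apply Hd. replace (Csub q p) with (Cmul (Cmul (Csub q p) (Csub q p)) l)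
      by (unfold l; field; auto). rewrite E. ring. }
  assert (Tp : T p = C0) by (unfold T, Caff, m; ring).
  assert (Tq : T q = C1) by (unfold T, Caff, m, l; field; auto).
  set (alpha := T c).
  assert (Halpha : alpha = Cdiv (Csub c p) (Csub q p)) by (unfold alpha, T, Caff, m, l, Cdiv; ring).
  assert (Hshift : forall r, T (Cadd b (Cscale r (Csub q p))) =
                             Cadd (RC (mq + r)) (Cmul (RC mc) alpha)).
  { intros r. rewrite Halpha, Hb, !Cscale_RC.
    replace (RC mp) with (Csub (Csub C1 (RC mq)) (RC mc)) by (apply Cpx_eq; simpl; lra).
    replace (RC (mq + r)) with (Cadd (RC mq) (RC r)) by (apply Cpx_eq; simpl; ring).
    unfold T, Caff, m, l, Cdiv. field. auto. }
  assert (Hsir : forall z, segment_integral_real p q c z p q <->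
                           segment_integral_real C0 C1 alpha (T z) C0 C1).
  { intros z. rewrite <- Tp, <- Tq. apply segment_integral_real_affine_iff; auto. }
  pose proof (normalized_apex_im p q c Hnc) as Him. rewrite <- Halpha in Him.
  destruct (Rlt_or_le 0 (snd alpha)) as [Hpos|Hneg].
  - exists (fst alpha), (snd alpha), T. split; [exact Hpos|]. split.
    + intros r. rewrite Hshift. apply Cpx_eq; simpl; ring.
    + intros z. rewrite Hsir. destruct alpha. reflexivity.
  - exists (fst alpha), (- snd alpha), (fun z => Cconj (T z)). split; [lra|]. split.
    + intros r. rewrite Hshift. apply Cpx_eq; simpl; ring.
    + intros z. rewrite Hsir, segment_integral_real_conj_iff.
      replace (Cconj C0) with C0 by (apply Cpx_eq; simpl; ring).
      replace (Cconj C1) with C1 by (apply Cpx_eq; simpl; ring).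
      destruct alpha. reflexivity.
Qed.

Lemma unique_real_point_on_parallel p q c b mp mq mc :
  0 < mp -> 0 < mq -> 0 < mc -> mp + mq + mc = 1 ->
  b = Cadd (Cadd (Cscale mp p) (Cscale mq q)) (Cscale mc c) -> noncollinear p q c ->
  exists r, - mq <= r <= mp /\ forall r',
    segment_integral_real p q c (Cadd b (Cscale r' (Csub q p))) p q <-> r' = r.
Proof.
  intros Hp Hq Hc Hsum Hb Hnc.
  destruct (triangle_normalization p q c b mp mq mc Hnc Hsum Hb) as [a [e [N [He [HN Hsir]]]]].
  assert (Hy : 0 < mc * e < e) by (split; [apply Rmult_lt_0_compat|]; nra).
  destruct (J_unique_root a e (mc * e) He (proj1 Hy) (proj2 Hy)) as [x [Hx [HJ Huniq]]].
  replace (mc * e * a / e) with (mc * a) in Hx by (field; lra).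
  replace (mc * e / e) with mc in Hx by (field; lra).
  exists (x - mq - mc * a). split; [lra|]. intros r'.
  rewrite Hsir, HN, (normalized_real_iff a e (mc * e) He (proj1 Hy)).
  split.
  - intros H. apply Huniq in H. lra.
  - intros ->. replace (mq + mc * a + (x - mq - mc * a)) with x by ring. exact HJ.
Qed.

Definition vertex_relabeling (a1 a2 a3 p q c : Cpx) : Prop :=
  (p, q, c) = (a1, a2, a3) \/ (p, q, c) = (a1, a3, a2) \/ (p, q, c) = (a2, a1, a3) \/
  (p, q, c) = (a2, a3, a1) \/ (p, q, c) = (a3, a1, a2) \/ (p, q, c) = (a3, a2, a1).

Lemma sel_relabeling a1 a2 a3 i j k :
  (1 <= i <= 3)%nat -> (1 <= j <= 3)%nat -> (1 <= k <= 3)%nat -> i <> j -> i <> k -> j <> k ->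
  vertex_relabeling a1 a2 a3 (sel a1 a2 a3 j) (sel a1 a2 a3 k) (sel a1 a2 a3 i).
Proof.
  intros Hi Hj Hk Hij Hik Hjk. unfold vertex_relabeling.
  assert (Ei : i = 1%nat \/ i = 2%nat \/ i = 3%nat) by lia.
  assert (Ej : j = 1%nat \/ j = 2%nat \/ j = 3%nat) by lia.
  assert (Ek : k = 1%nat \/ k = 2%nat \/ k = 3%nat) by lia.
  destruct Ei as [-> | [-> | ->]]; destruct Ej as [-> | [-> | ->]];
    destruct Ek as [-> | [-> | ->]];
    try lia; simpl; repeat (try (left; reflexivity); right); reflexivity.
Qed.

Ltac relabeling_cases H := destruct H as [H|[H|[H|[H|[H|H]]]]]; injection H as -> -> ->.

Lemma relabeling_cubic a1 a2 a3 p q c : vertex_relabeling a1 a2 a3 p q c ->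
  forall t, Cmul (Cmul (Csub t p) (Csub t q)) (Csub t c) =
            Cmul (Cmul (Csub t a1) (Csub t a2)) (Csub t a3).
Proof. intros H t. relabeling_cases H; ring. Qed.

Lemma relabeling_noncollinear a1 a2 a3 p q c : vertex_relabeling a1 a2 a3 p q c ->
  noncollinear a1 a2 a3 -> noncollinear p q c.
Proof. unfold noncollinear. intros H Hnc E. relabeling_cases H; apply Hnc; lra. Qed.

Ltac permute_weights l1 l2 l3 :=
  let finish := repeat split; try lra; apply Cpx_eq; simpl; ring in
  first [ exists l1, l2, l3; finish | exists l1, l3, l2; finish | exists l2, l1, l3; finish
        | exists l2, l3, l1; finish | exists l3, l1, l2; finish | exists l3, l2, l1; finish ].

Lemma relabeling_interior a1 a2 a3 p q c z : vertex_relabeling a1 a2 a3 p q c ->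
  in_triangle_interior a1 a2 a3 z -> in_triangle_interior p q c z.
Proof.
  intros H [l1 [l2 [l3 [H1 [H2 [H3 [Hs ->]]]]]]]. relabeling_cases H; permute_weights l1 l2 l3.
Qed.

Lemma relabeling_triangle a1 a2 a3 p q c z : vertex_relabeling a1 a2 a3 p q c ->
  in_triangle p q c z -> in_triangle a1 a2 a3 z.
Proof.
  intros H [l1 [l2 [l3 [H1 [H2 [H3 [Hs ->]]]]]]]. relabeling_cases H; permute_weights l1 l2 l3.
Qed.

(* Main theorem: relabel the vertices so that the side is [p,q] = [a_j,a_k] and apply the
   theorem for a side of a triangle; the point found lies in the triangle because its
   barycentric coordinates (mp - r, mq + r, mc) are nonnegative. *)
Theorem mainTheorem12 (a1 a2 a3 : Cpx) (i j k : nat)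
  (Hd12 : a1 <> a2) (Hd13 : a1 <> a3) (Hd23 : a2 <> a3)
  (Hnc : noncollinear a1 a2 a3)
  (Hi : (1 <= i <= 3)%nat) (Hj : (1 <= j <= 3)%nat) (Hk : (1 <= k <= 3)%nat)
  (Hij : i <> j) (Hik : i <> k) (Hjk : j <> k)
  (b : Cpx) (Hb : in_triangle_interior a1 a2 a3 b) :
  exists b' : Cpx,
    (on_parallel_line b (sel a1 a2 a3 j) (sel a1 a2 a3 k) b' /\
     segment_integral_real a1 a2 a3 b' (sel a1 a2 a3 j) (sel a1 a2 a3 k) /\
     (forall b'' : Cpx,
        on_parallel_line b (sel a1 a2 a3 j) (sel a1 a2 a3 k) b'' ->
        segment_integral_real a1 a2 a3 b'' (sel a1 a2 a3 j) (sel a1 a2 a3 k) ->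
        b'' = b')) /\
    in_triangle a1 a2 a3 b'.
Proof.
  pose proof (sel_relabeling a1 a2 a3 i j k Hi Hj Hk Hij Hik Hjk) as Hrel.
  set (p := sel a1 a2 a3 j) in *. set (q := sel a1 a2 a3 k) in *. set (c := sel a1 a2 a3 i) in *.
  destruct (relabeling_interior _ _ _ _ _ _ b Hrel Hb) as [mp [mq [mc [Hp [Hq [Hc [Hs Hbary]]]]]]].
  destruct (unique_real_point_on_parallel p q c b mp mq mc Hp Hq Hc Hs Hbary
              (relabeling_noncollinear _ _ _ _ _ _ Hrel Hnc)) as [r [Hr Hiff]].
  pose proof (relabeling_cubic _ _ _ _ _ _ Hrel) as Hcubic.
  exists (Cadd b (Cscale r (Csub q p))). split; [split; [|split]|].
  - exists r. reflexivity.
  - apply (segment_integral_real_vertices p q c); [exact Hcubic|]. now apply Hiff.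
  - intros b'' [r'' ->] H''.
    apply (segment_integral_real_vertices a1 a2 a3 p q c) in H''; [|intros; symmetry; apply Hcubic].
    apply Hiff in H''. subst. reflexivity.
  - apply (relabeling_triangle a1 a2 a3 p q c); [exact Hrel|].
    exists (mp - r), (mq + r), mc. repeat split; try lra.
    rewrite Hbary. apply Cpx_eq; simpl; ring.
Qed.
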